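(* Let $f:X\to Y$ be a map of algebraic Kan complexes. Then $f$ sends thin simplices to thin simplices. In particular, if $\alpha$ and $\beta$ are co-thin simplices of $X$, then $f\alpha$ and $f\beta$ are co-thin simplices of $Y$.
   Context: An algebraic Kan complex is a simplicial set $X$ together with a function $\text{fill}_X$ assigning to every horn $h:\Lambda^n_k\to X$ a chosen filler $\text{fill}_X(h):\Delta^n\to X$ extending $h$ (a ''distinguished filler''); a map of algebraic Kan complexes is a simplicial map $f$ with $f(\text{fill}_X(h))=\text{fill}_Y(f\circ h)$ for all horns $h$. A simplex of an algebraic Kan complex is called thin, inductively, if it is degenerate, or is a distinguished filler, or is a composition of thin simplices (i.e. it is the $k$-th face of the distinguished filler of a horn $\Lambda^n_k\to X$ all of whose faces are thin). Two thin simplices $\alpha,\beta:\Delta^n\to X$ are co-thin if there is a horn $\Lambda^n_k\to X$ of which both are extensions (they agree on some $\Lambda^n_k$). *)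

(* Simplicial sets as presheaves on the
   simplex category Delta, with objects [n] = 'I_n.+1 and monotone maps. *)
From mathcomp Require Import all_boot.
From mathcomp Require Import zify.
From Stdlib Require Import Lia.
Set Implicit Arguments. Unset Strict Implicit. Unset Printing Implicit Defensive.

Definition mono (m n : nat) :=
  {f : 'I_m.+1 -> 'I_n.+1 | forall i j : 'I_m.+1, i <= j -> f i <= f j}.

Record sSet := SSet {
  sx :> nat -> Type;
  smap : forall m n, mono m n -> sx n -> sx m;
  smap_id : forall n (t : mono n n) (x : sx n),
      (forall i, sval t i = i) -> smap t x = x;
  smap_comp : forall l m n (p : mono l m) (t : mono m n) (q : mono l n) (x : sx n),
      (forall i, sval q i = sval t (sval p i)) -> smap q x = smap p (smap t x)
}.
Arguments smap {s m n} _ _.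

Lemma face_mono n (j : 'I_n.+2) :
  forall i i' : 'I_n.+1, i <= i' -> lift j i <= lift j i'.
Proof. by move=> i i' H; rewrite /= leq_bump2. Qed.
Definition face n (j : 'I_n.+2) : mono n n.+1 := exist _ (lift j) (@face_mono n j).

Definition degf n (i : 'I_n.+1) (j : 'I_n.+2) : 'I_n.+1 :=
  inord (if j <= i then nat_of_ord j else (nat_of_ord j).-1).
Lemma degf_mono n (i : 'I_n.+1) :
  forall j j' : 'I_n.+2, j <= j' -> degf i j <= degf i j'.
Proof.
move=> j j' H; rewrite /degf.
have Hb : forall x : 'I_n.+2, (if x <= i then nat_of_ord x else (nat_of_ord x).-1) < n.+1.
  move=> x; case: ifP => Hx; first by apply: leq_ltn_trans Hx (ltn_ord i).
  by have := ltn_ord x; case: (nat_of_ord x) => //=.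
rewrite !inordK //.
case: ifP => Hj; case: ifP => Hj' //; lia.
Qed.
Definition degen n (i : 'I_n.+1) : mono n.+1 n := exist _ (degf i) (@degf_mono n i).

Definition inHorn n (k : 'I_n.+2) m (t : mono m n.+1) : Prop :=
  exists j : 'I_n.+2, j != k /\ forall i, sval t i != j.

Record hornMap (X : sSet) n (k : 'I_n.+2) := HornMap {
  hm : forall m (t : mono m n.+1), inHorn k t -> X m;
  hm_nat : forall l m (t : mono m n.+1) (p : mono l m) (q : mono l n.+1)
      (ht : inHorn k t) (hq : inHorn k q),
      (forall i, sval q i = sval t (sval p i)) -> hm hq = smap p (hm ht)
}.
Arguments hornMap : clear implicits.
Arguments hm {X n k} _ {m} t _.

(* The map Delta^{n+1} -> X corresponding (Yoneda) to x extends h. *)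
Definition extends (X : sSet) n (k : 'I_n.+2) (x : X n.+1) (h : hornMap X n k) :=
  forall m (t : mono m n.+1) (ht : inHorn k t), smap t x = hm h t ht.

Record akc := AKC {
  ak :> sSet;
  fill : forall n (k : 'I_n.+2), hornMap ak n k -> ak n.+1;
  fill_ext : forall n k (h : hornMap ak n k), extends (fill h) h
}.
Arguments fill {a n k} _.

Record sMap (X Y : sSet) := SMap {
  smf :> forall n, X n -> Y n;
  smf_nat : forall m n (t : mono m n) (x : X n), smf (smap t x) = smap t (smf x)
}.
Arguments smf {X Y} _ {n} _.

Definition hornComp_hm (X Y : sSet) (f : sMap X Y) n k (h : hornMap X n k)
  m (t : mono m n.+1) (ht : inHorn k t) : Y m := f _ (hm h t ht).
Lemma hornComp_nat (X Y : sSet) (f : sMap X Y) n k (h : hornMap X n k) :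
  forall l m (t : mono m n.+1) (p : mono l m) (q : mono l n.+1)
      (ht : inHorn k t) (hq : inHorn k q),
      (forall i, sval q i = sval t (sval p i)) ->
      hornComp_hm f h hq = smap p (hornComp_hm f h ht).
Proof.
move=> l m t p q ht hq H; rewrite /hornComp_hm -smf_nat.
by rewrite (hm_nat h ht hq H).
Qed.
Definition hornComp (X Y : sSet) (f : sMap X Y) n k (h : hornMap X n k)
  : hornMap Y n k := HornMap (@hornComp_nat X Y f n k h).

Record akcMap (X Y : akc) := AKCMap {
  amf :> sMap X Y;
  amf_fill : forall n k (h : hornMap X n k), amf _ (fill h) = fill (hornComp amf h)
}.

Inductive thin (X : akc) : forall n, X n -> Prop :=
| thin_degen n (i : 'I_n.+1) (y : X n) : thin (smap (degen i) y)
| thin_fill n (k : 'I_n.+2) (h : hornMap X n k) : thin (fill h)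
| thin_comp n (k : 'I_n.+2) (h : hornMap X n k) :
    (forall (j : 'I_n.+2) (p : inHorn k (face j)), j != k -> thin (hm h (face j) p)) ->
    thin (smap (face k) (fill h)).

Definition cothin (X : akc) n (a b : X n.+1) : Prop :=
  thin a /\ thin b /\ exists (k : 'I_n.+2) (h : hornMap X n k), extends a h /\ extends b h.

From mathcomp Require Import all_boot.

Lemma extends_hornComp (X Y : sSet) (f : sMap X Y) n (k : 'I_n.+2)
    (x : X n.+1) (h : hornMap X n k) :
  extends x h -> extends (f _ x) (hornComp f h).
Proof. by move=> ext_xh m t ht; rewrite -smf_nat ext_xh. Qed.

Lemma thin_map (X Y : akc) (f : akcMap X Y) n (x : X n) : thin x -> thin (f n x).
Proof.
elim=> {n x} [n i y|n k h|n k h _ IH].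
- by rewrite smf_nat; apply: thin_degen.
- by rewrite amf_fill; apply: thin_fill.
- by rewrite smf_nat amf_fill; apply: thin_comp => j p neq_jk; apply: IH.
Qed.

Lemma cothin_map (X Y : akc) (f : akcMap X Y) n (a b : X n.+1) :
  cothin a b -> cothin (f n.+1 a) (f n.+1 b).
Proof.
move=> [thin_a [thin_b [k [h [ext_ah ext_bh]]]]].
split; first exact: thin_map.
split; first exact: thin_map.
by exists k, (hornComp f h); split; apply: extends_hornComp.
Qed.

Theorem mainTheorem6 (X Y : akc) (f : akcMap X Y) :
  (forall n (x : X n), thin x -> thin (f n x)) /\
  (forall n (a b : X n.+1), cothin a b -> cothin (f n.+1 a) (f n.+1 b)).
Proof. by split=> n; [apply: thin_map | apply: cothin_map]. Qed.
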